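(* Let $n\ge 2$ be an integer and $A\subseteq L_n$. (i) If $B\subseteq L_n\setminus A$ has cardinality continuum, then $B$ is not $z$-embedded in $(X_n,\tau(A))$. (ii) If $B\subseteq L_n\setminus A$ is a closed uncountable subset of $(L_n,\tau_E|_{L_n})$, then $L_n$ is not $z$-embedded in $(X_n,\tau(A))$.
   Context: For $\overline{x},\overline{a}\in\mathbb R^n$ let $|\overline{x}-\overline{a}|$ be the Euclidean distance and $B(\overline{a},\epsilon)=\{\overline{x}\in\mathbb R^n:|\overline{x}-\overline{a}|<\epsilon\}$. Let $P_n=\{\overline{x}\in\mathbb R^n: x_n>0\}$, $L_n=\{\overline{x}\in\mathbb R^n: x_n=0\}$, $X_n=P_n\cup L_n$, and let $\tau_E$ denote the Euclidean topology on $X_n$. For $\overline{a}\in L_n$ and $\epsilon>0$ put $\overline{a(\epsilon)}=(a_1,\dots,a_{n-1},\epsilon)$ and $\tilde B(\overline{a},\epsilon)=\{\overline{a}\}\cup B(\overline{a(\epsilon)},\epsilon)$. For $A\subseteq L_n$, the topology $\tau(A)$ on $X_n$ is generated by the local bases: at $\overline{a}\in P_n$, the sets $B(\overline{a},\epsilon)$ with $0<\epsilon<a_n$; at $\overline{a}\in A$, the sets $B(\overline{a},\epsilon)\cap X_n$ with $\epsilon>0$; at $\overline{a}\in L_n\setminus A$, the sets $\tilde B(\overline{a},\epsilon)$ with $\epsilon>0$. A subset $Y$ of a space $X$ is $z$-embedded in $X$ if every zero set of $Y$ is the trace on $Y$ of some zero set of $X$. *)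

From HB Require Import structures.
From mathcomp Require Import all_boot all_order all_algebra.
From mathcomp Require Import all_classical all_reals.
From mathcomp Require Import Rstruct.
From Stdlib Require Import Rdefinitions.
Set Implicit Arguments. Unset Strict Implicit. Unset Printing Implicit Defensive.
Import Order.TTheory GRing.Theory Num.Theory.
Local Open Scope classical_set_scope.
Local Open Scope ring_scope.

(* Points of R^n : coordinate functions on the index set {0,...,n-1}
   (coordinate x_k of the paper is x (k-1)). *)
Definition pt (n : nat) := 'I_n -> R.

Definition edist n (x a : pt n) : R := Num.sqrt (\sum_(i < n) (x i - a i) ^+ 2).

Definition ball_E n (a : pt n) (eps : R) : set (pt n) := [set x | edist x a < eps].

(* last coordinate x_n (0 in the degenerate case n = 0) *)
Definition lastc (n : nat) : pt n -> R :=
  match n return pt n -> R with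
  | 0 => fun _ => 0
  | m.+1 => fun x => x ord_max
  end.

Definition Pn n : set (pt n) := [set x | 0 < lastc x].
Definition Ln n : set (pt n) := [set x | lastc x = 0].
Arguments Pn : clear implicits.
Arguments Ln : clear implicits.
Definition Xn n : set (pt n) := Pn n `|` Ln n.
Arguments Pn : clear implicits.
Arguments Ln : clear implicits.
Arguments Xn : clear implicits.

Definition lift_pt n (a : pt n) (eps : R) : pt n :=
  fun i => if val i == n.-1 then eps else a i.

Definition tball n (a : pt n) (eps : R) : set (pt n) :=
  [set a] `|` ball_E (lift_pt a eps) eps.

(* The local base of tau(A) at a point a of X_n: V is a basic neighbourhood of a. *)
Definition basic_nbhd n (A : set (pt n)) (a : pt n) (V : set (pt n)) : Prop :=
  [/\ Pn n a -> exists2 eps, 0 < eps /\ eps < lastc a & V = ball_E a eps,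
      A a -> exists2 eps, 0 < eps & V = ball_E a eps `&` Xn n &
      (Ln n a /\ ~ A a) -> exists2 eps, 0 < eps & V = tball a eps].

(* f restricted to the subspace Y of (X_n, tau(A)) is continuous
   (continuity expressed through the local bases generating tau(A)). *)
Definition cont_on n (A : set (pt n)) (Y : set (pt n)) (f : pt n -> R) : Prop :=
  forall y, Y y -> forall e : R, 0 < e ->
    exists V, basic_nbhd A y V /\
      (forall z, V z -> Y z -> `|f z - f y| < e).

Definition zero_set n (A : set (pt n)) (Y Z : set (pt n)) : Prop :=
  exists f : pt n -> R, cont_on A Y f /\ Z = [set y | Y y /\ f y = 0].

Definition z_embedded n (A : set (pt n)) (Y : set (pt n)) : Prop :=
  forall Z, zero_set A Y Z ->
    exists2 Z', zero_set A (Xn n) Z' & Z = Z' `&` Y.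

Definition closed_in_Ln n (B : set (pt n)) : Prop :=
  B `<=` Ln n /\
  forall x, Ln n x -> (forall e : R, 0 < e -> exists2 b, B b & edist x b < e) -> B x.

From mathcomp Require Import all_boot all_order all_algebra.
From mathcomp Require Import all_classical all_reals.
From mathcomp Require Import Rstruct.
From mathcomp Require Import ring lra.
From Stdlib Require Import Rdefinitions.
Import Order.TTheory GRing.Theory Num.Theory.
Local Open Scope classical_set_scope.
Local Open Scope ring_scope.
Set Implicit Arguments. Unset Strict Implicit. Unset Printing Implicit Defensive.

(* At a point b of L_n \ A the basic neighbourhoods of tau(A) are {b} together with
   the open balls tangent to L_n at b, which meet the dense countable set of rational
   points of P_n.  So whether a continuous g : X_n -> R vanishes at b is read off the
   values of g at rational points, and the trace on L_n \ A of every zero set of X_n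
   is coded by one sequence in 2^N.  A diagonal argument then shows that these traces
   cannot exhaust the subsets of a set containing an injective image of 2^N.  In (i)
   every subset of B is a zero set of B, as B is discrete, and 2^N injects into B
   because |B| = c.  In (ii) every subset of B is a zero set of L_n, as B is closed
   and discrete in L_n, and 2^N injects into B by a Cantor scheme of shrinking boxes
   centred at condensation points of B. *)

Lemma cantor_diagonal I T (psi : I -> T) (Phi : I -> set T) : injective psi ->
  ~ (forall S, S `<=` range psi -> exists c, forall a, S (psi a) <-> Phi c (psi a)).
Proof.
move=> psi_inj coded.
pose D := [set a | ~ Phi a (psi a)].
have [|c Dc] := coded (psi @` D); first by move=> _ [a _ <-]; exists a.
have diag : (psi @` D) (psi c) <-> ~ Phi c (psi c).
  by split=> [[a Da /psi_inj <-] //|]; exists c.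
by have := Dc c; rewrite diag; tauto.
Qed.

Lemma card_leT_inj U T (B : set T) : ([set: U] #<= B)%card ->
  exists2 h : U -> T, (forall u, B (h u)) & injective h.
Proof.
move=> /card_leP [f]; exists (fun u => \val (f (SigSub (mem_set (I : setT u))))).
  by move=> u; apply: set_mem; apply: valP.
by move=> u v /val_inj /(@inj _ _ _ f) => /(_ (mem_set I) (mem_set I)) [].
Qed.

Lemma countable_setU T (X Y : set T) : countable X -> countable Y -> countable (X `|` Y).
Proof.
move=> cX cY; have -> : X `|` Y = \bigcup_(b in [set: bool]) (if b then X else Y).
  apply/seteqP; split=> [x [Xx|Yx]|x [[] _ ?]]; by [exists true | exists false | left | right].
by apply: bigcup_countable => [|[]]; first exact: countableP.
Qed.

Lemma uncountable_two_points T (S : set T) : ~ countable S ->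
  exists x y, [/\ S x, S y & x <> y].
Proof.
move=> S_unc; apply: contrapT => no_two; apply: S_unc.
have [->|/set0P [x Sx]] := eqVneq S set0; first exact: countable0.
apply: sub_countable (countable1 x); apply: subset_card_le => y Sy.
by apply: contrapT => yx; apply: no_two; exists y, x.
Qed.

Lemma nested_intervals (lo hi : nat -> R) :
  (forall k, lo k <= lo k.+1) -> (forall k, hi k.+1 <= hi k) ->
  (forall k, lo k <= hi k) -> exists t, forall k, lo k <= t <= hi k.
Proof.
move=> /Order.NatMonotonyTheory.nondecnP lo_up /Order.NatMonotonyTheory.nonincnP hi_down lohi.
have lo_hi j k : lo j <= hi k.
  case: (leqP j k) => [/lo_up jk|/ltnW/hi_down kj]; first exact: le_trans jk (lohi k).
  exact: le_trans (lohi j) kj.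
have lo0 : range lo !=set0 by exists (lo 0%N), 0%N.
exists (sup (range lo)) => k; apply/andP; split.
  by apply: sup_upper_bound; [split=> //; exists (hi 0%N) => _ [j _ <-] | exists k].
by apply: ge_sup => // _ [j _ <-].
Qed.

Definition cbox n (c : pt n) (r : R) : set (pt n) := [set y | forall i, `|y i - c i| <= r].

Definition subbox n (x' x : pt n * R) := forall i, `|x'.1 i - x.1 i| + x'.2 <= x.2.

Lemma subbox_cbox n (x' x : pt n * R) : subbox x' x -> cbox x'.1 x'.2 `<=` cbox x.1 x.2.
Proof.
move=> x'x y yx' i; apply: le_trans (x'x i).
by apply: le_trans (ler_distD (x'.1 i) _ _) _; rewrite addrC lerD2l.
Qed.

Lemma edistC n (x y : pt n) : edist x y = edist y x.
Proof. by rewrite /edist; congr Num.sqrt; apply: eq_bigr => i _; rewrite -sqrrN opprB. Qed.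

Lemma coord_le_edist n (x y : pt n) i : `|x i - y i| <= edist x y.
Proof.
rewrite /edist -sqrtr_sqr ler_sqrt; last by apply: sumr_ge0 => j _; exact: sqr_ge0.
rewrite (bigD1 i) //= lerDl; apply: sumr_ge0 => j _; exact: sqr_ge0.
Qed.

Lemma edist_le_box n (x y : pt n) (d : R) : 0 <= d -> (forall i, `|x i - y i| <= d) ->
  edist x y <= n%:R * d.
Proof.
move=> d0 xy; rewrite /edist -(ger0_norm (mulr_ge0 (ler0n R n) d0)) -sqrtr_sqr.
rewrite ler_sqrt ?sqr_ge0 //; apply: le_trans (_ : \sum_(i < n) d ^+ 2 <= _).
  by apply: ler_sum => i _; rewrite -real_normK ?num_real // lerXn2r ?nnegrE.
rewrite sumr_const card_ord -[_ *+ n]mulr_natl exprMn ler_wpM2r ?sqr_ge0 // -natrX ler_nat.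
by case: n {x y xy} => // k; rewrite leq_pmulr.
Qed.

Definition rat_pt n (q : {ffun 'I_n -> rat}) : pt n := fun i => ratr (q i).

Lemma rat_pt_approx n (x : pt n) (d : R) : 0 < d ->
  exists q : {ffun 'I_n -> rat}, forall i, `|rat_pt q i - x i| < d.
Proof.
move=> d0; have near_rat i : exists q : rat, `|ratr q - x i| < d.
  have [q] : exists q : rat, ratr q \in `]x i, x i + d[ by apply: rat_in_itvoo; rewrite ltrDl.
  by rewrite in_itv /= => /andP[? ?]; exists q; rewrite ltr_norml; apply/andP; split; lra.
have [f hf] := choice near_rat.
by exists [ffun i => f i] => i; rewrite /rat_pt ffunE.
Qed.

Section BoxScheme.
Variables (n : nat) (good : set (pt n * R)).
Hypothesis good_radius : forall x, good x -> 0 < x.2.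

Definition box_split (x : pt n * R) (y : (pt n * R) * (pt n * R)) :=
  [/\ good y.1 /\ good y.2, subbox y.1 x /\ subbox y.2 x,
      y.1.2 <= x.2 / 2 /\ y.2.2 <= x.2 / 2 &
      forall t, cbox y.1.1 y.1.2 t -> cbox y.2.1 y.2.2 t -> False].

Section Branch.
Variables (root : pt n * R) (child : pt n * R -> (pt n * R) * (pt n * R)).
Hypothesis good_root : good root.
Hypothesis child_split : forall x, good x -> box_split x (child x).

Fixpoint branch (a : nat -> bool) k : pt n * R :=
  if k is k'.+1 then let y := child (branch a k') in if a k' then y.1 else y.2 else root.

Lemma good_branch a k : good (branch a k).
Proof.
elim: k => //= k IH; have [[? ?] _ _ _] := child_split IH.
by case: (a k).
Qed.

Lemma branch_subbox a k : subbox (branch a k.+1) (branch a k).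
Proof. by have [_ [? ?] _ _] := child_split (good_branch a k); rewrite /=; case: (a k). Qed.

Lemma branch_radius a k : (branch a k).2 * k.+1%:R <= root.2.
Proof.
elim: k => [|k IH]; first by rewrite mulr1.
have [_ _ [? ?] _] := child_split (good_branch a k).
have r0 := good_radius (good_branch a k).
have half : (branch a k.+1).2 <= (branch a k).2 / 2 by rewrite /=; case: (a k).
move: IH half r0; rewrite -[k.+2%:R]natr1 -[k.+1%:R]natr1; have := ler0n R k; nra.
Qed.

Lemma branch_limit a : exists t, forall k, cbox (branch a k).1 (branch a k).2 t.
Proof.
have coord i : exists ti, forall k,
    (branch a k).1 i - (branch a k).2 <= ti <= (branch a k).1 i + (branch a k).2.
  apply: nested_intervals => k; last by have := good_radius (good_branch a k); lra.
    by have := branch_subbox a k i; rewrite -lerBrDr ler_norml => /andP[]; lra.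
  by have := branch_subbox a k i; rewrite -lerBrDr ler_norml => /andP[]; lra.
have [t ht] := choice coord; exists t => k i.
by have := ht i k; rewrite ler_norml => /andP[? ?]; apply/andP; split; lra.
Qed.

Lemma branch_eq (a a' : nat -> bool) (k : nat) :
  (forall j : nat, (j < k)%nat -> a j = a' j) -> branch a k = branch a' k.
Proof. by elim: k => //= k IH eq_aa'; rewrite IH ?eq_aa' // => j /leqW; apply: eq_aa'. Qed.

Lemma branch_unique a a' t : (forall k, cbox (branch a k).1 (branch a k).2 t) ->
  (forall k, cbox (branch a' k).1 (branch a' k).2 t) -> a = a'.
Proof.
move=> a_t a'_t; apply/funext => j; apply: contrapT => neq.
have ex_diff : exists k, a k != a' k by exists j; apply/eqP.
case: (ex_minnP ex_diff) => k /eqP akk' kmin.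
have same : branch a k = branch a' k.
  by apply: branch_eq => i ik; apply/eqP; apply: contraT => /kmin; rewrite leqNgt ik.
have [_ _ _ disj] := child_split (good_branch a k).
move: (a_t k.+1) (a'_t k.+1); rewrite /= -same.
by case: (a k) (a' k) akk' => [] [] // _ ? ?; [apply: disj | apply: disj].
Qed.

End Branch.

Lemma box_scheme_inj root : good root -> (forall x, good x -> exists y, box_split x y) ->
  exists2 psi : (nat -> bool) -> pt n, injective psi &
    forall a e, 0 < e -> exists2 x, good x /\ x.2 < e & cbox x.1 x.2 (psi a).
Proof.
move=> good_root splittable.
have [child child_split] : {child & forall x, good x -> box_split x (child x)}.
  apply: (@choice _ _ (fun x y => good x -> box_split x y)) => x.
  by have [/splittable [y]|] := pselect (good x); [exists y | exists (x, x)].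
have [psi psi_lim] := choice (branch_limit good_root child_split).
exists psi => [a a' eq_psi|a e e0].
  by apply: (branch_unique good_root child_split (psi_lim a)); rewrite eq_psi.
have r0 := good_radius good_root.
have [k] := ltr_add_invr (divr_gt0 e0 r0); rewrite add0r ltr_pdivlMr // => ke.
exists (branch root child a k); last exact: psi_lim.
split; first exact: good_branch.
rewrite -(ltr_pM2r (ltr0Sn R k)).
apply: le_lt_trans (branch_radius good_root child_split a k) _.
by rewrite -ltr_pdivrMr ?ltr0Sn // mulrC.
Qed.

End BoxScheme.

Lemma cantor_inj_R : exists psi : (nat -> bool) -> R, injective psi.
Proof.
(* the two outer thirds of a box, as in the ternary Cantor set *)
pose third (x : pt 1 * R) (b : bool) : pt 1 * R :=
  (fun i => x.1 i + (if b then 2 else -2) * x.2 / 3, x.2 / 3).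
have [x x0|psi psi_inj _] :=
  @box_scheme_inj 1 (fun x => 0 < x.2) (fun _ x0 => x0) (fun=> 0, 1) ltr01.
exists (third x true, third x false); split=> /=.
- by split; lra.
- by split=> i /=; rewrite addrAC subrr add0r; [rewrite ger0_norm | rewrite ler0_norm]; lra.
- by split; lra.
- by move=> t /(_ ord0) + /(_ ord0); rewrite !ler_norml => /andP[? ?] /andP[? ?]; lra.
exists (fun a => psi a ord0) => a a' eq_psi; apply: psi_inj.
by apply/funext => i; rewrite (ord1 i).
Qed.

Definition closed_E n (B : set (pt n)) :=
  forall x, (forall e, 0 < e -> exists2 b, B b & edist x b < e) -> B x.

Lemma closed_E_gap n (B : set (pt n)) y : closed_E B -> ~ B y ->
  exists2 e, 0 < e & forall b, B b -> e <= edist y b.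
Proof.
move=> B_closed nBy; apply: contrapT => no_gap; apply: nBy; apply: B_closed => e e0.
apply: contrapT => far; apply: no_gap; exists e => // b Bb.
by rewrite leNgt; apply/negP => yb; apply: far; exists b.
Qed.

Definition condensation_pt n (B : set (pt n)) (x : pt n) :=
  forall r, 0 < r -> ~ countable (B `&` cbox x r).

Lemma countable_not_condensation n (B : set (pt n)) : countable (B `\` condensation_pt B).
Proof.
pose box (i : {ffun 'I_n -> rat} * nat) := B `&` cbox (rat_pt i.1) i.2.+1%:R^-1.
apply: (@sub_countable _ _ _ (\bigcup_(i in [set i | countable (box i)]) box i)); last first.
  by apply: bigcup_countable => //; exact: countableP.
apply: subset_card_le => x [Bx not_cond].
have [r [r0 Br]] : exists r, 0 < r /\ countable (B `&` cbox x r).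
  by apply: contrapT => hn; apply: not_cond => r r0 Br; apply: hn; exists r.
have [k] := ltr_add_invr (divr_gt0 r0 (ltr0Sn R 1)); rewrite add0r => kr.
have [q qx] : exists q : {ffun 'I_n -> rat}, forall i, `|rat_pt q i - x i| < k.+1%:R^-1.
  by apply: rat_pt_approx; rewrite invr_gt0.
exists (q, k); last by split=> // i; rewrite distrC ltW.
apply: sub_countable Br; apply: subset_card_le => y [By yq]; split=> //.
apply: (@subbox_cbox _ (rat_pt q, k.+1%:R^-1) (x, r)) yq => i /=.
by have := qx i; move: kr; set d := k.+1%:R^-1; lra.
Qed.

Lemma uncountable_condensation_box n (B : set (pt n)) c r : condensation_pt B c -> 0 < r ->
  ~ countable (B `&` condensation_pt B `&` cbox c r).
Proof.
move=> cond_c r0 count_C; apply: (cond_c r r0).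
apply: sub_countable (countable_setU count_C (countable_not_condensation B)).
apply: subset_card_le => y [By cy].
by have [cond_y|] := pselect (condensation_pt B y); [left | right].
Qed.

Definition condensation_node n (B : set (pt n)) (x : pt n * R) :=
  [/\ B x.1, condensation_pt B x.1 & 0 < x.2].

Lemma condensation_split n (B : set (pt n)) x : condensation_node B x ->
  exists y, box_split (condensation_node B) x y.
Proof.
move=> [Bc cond_c r0]; have r20 : 0 < x.2 / 2 by rewrite divr_gt0.
have [y0 [y1 [[[By0 cond0] y0c] [[By1 cond1] y1c] y01]]] :=
  uncountable_two_points (uncountable_condensation_box cond_c r20).
have [i yi] : exists i, y0 i != y1 i.
  apply: contrapT => same; apply: y01; apply/funext => i.
  by apply/eqP; apply: contrapT => yi; apply: same; exists i; apply/negP.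
have d0 : 0 < `|y0 i - y1 i| / 3 by rewrite divr_gt0 // normr_gt0 subr_eq0.
pose r' := Num.min (x.2 / 2) (`|y0 i - y1 i| / 3).
have r'0 : 0 < r' by rewrite lt_min r20 d0.
have r'x : r' <= x.2 / 2 by rewrite ge_min lexx.
have r'y : r' <= `|y0 i - y1 i| / 3 by rewrite ge_min lexx orbT.
exists ((y0, r'), (y1, r')); split=> //=.
- by split=> j /=; [have := y0c j | have := y1c j]; lra.
- move=> t /(_ i) t0 /(_ i) t1.
  by have := ler_distD (t i) (y0 i) (y1 i); rewrite distrC in t0; lra.
Qed.

Lemma closed_uncountable_cantor n (B : set (pt n)) : closed_E B -> ~ countable B ->
  exists2 psi : (nat -> bool) -> pt n, (forall a, B (psi a)) & injective psi.
Proof.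
move=> B_closed B_unc.
have [c [Bc cond_c]] : exists c, B c /\ condensation_pt B c.
  apply: contrapT => no_cond; apply: B_unc; apply: sub_countable (countable_not_condensation B).
  by apply: subset_card_le => y By; split=> // cond_y; apply: no_cond; exists y.
have root_node : condensation_node B (c, 1) by split=> //; exact: ltr01.
have node_radius x : condensation_node B x -> 0 < x.2 by case.
have [psi psi_inj small_box] := box_scheme_inj node_radius root_node (@condensation_split n B).
exists psi => // a; apply: B_closed => e e0.
have [x [[Bx _ x0] xe] psi_x] := small_box a _ (divr_gt0 e0 (ltr0Sn R n)).
exists x.1 => //; apply: le_lt_trans (edist_le_box (ltW x0) psi_x) _.
move: xe; rewrite ltr_pdivlMr ?ltr0Sn // => xe.
have : (n%:R : R) <= n.+1%:R by rewrite ler_nat.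
nra.
Qed.

Lemma closed_in_Ln_closed_E m (B : set (pt m.+1)) : closed_in_Ln B -> closed_E B.
Proof.
move=> [BL Bcl] x near_x; apply: Bcl => //; rewrite /Ln /=.
apply/eqP; apply: contraT => x0.
have [b Bb] : exists2 b, B b & edist x b < `|x ord_max| by apply: near_x; rewrite normr_gt0.
have bmax : b ord_max = 0 := BL b Bb.
by rewrite ltNge (le_trans _ (coord_le_edist x b ord_max)) // bmax subr0.
Qed.

Section TangentBall.
Variable m : nat.
Local Notation pm := (pt m.+1).

Definition tangent_ball (b : pm) (mu : R) : set pm := ball_E (lift_pt b mu) mu.

Definition hdist2 (b x : pm) : R :=
  \sum_(i < m) (x (widen_ord (leqnSn m) i) - b (widen_ord (leqnSn m) i)) ^+ 2.

Lemma tangent_ballE b x mu : 0 < mu ->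
  tangent_ball b mu x <-> hdist2 b x + x ord_max ^+ 2 < 2 * mu * x ord_max.
Proof.
move=> mu0; rewrite /tangent_ball /ball_E /edist /=.
rewrite -[X in _ < X]gtr0_norm // -sqrtr_sqr ltr_sqrt ?exprn_gt0 // big_ord_recr /=.
have -> : \sum_(i < m) (x (widen_ord (leqnSn m) i) - lift_pt b mu (widen_ord (leqnSn m) i)) ^+ 2
    = hdist2 b x.
  apply: eq_bigr => i _; rewrite /lift_pt /=.
  by have := ltn_ord i; rewrite ltn_neqAle => /andP[/negPf -> _].
by rewrite /lift_pt /= eqxx; split=> ?; nra.
Qed.

Lemma hdist2_ge0 b x : 0 <= hdist2 b x.
Proof. by apply: sumr_ge0 => i _; apply: sqr_ge0. Qed.

Lemma tangent_ball_pos b x mu : 0 < mu -> tangent_ball b mu x -> 0 < x ord_max.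
Proof. by move=> mu0 /(tangent_ballE _ _ mu0); have := hdist2_ge0 b x; nra. Qed.

Lemma tangent_ball_le b mu eps : 0 < mu -> mu <= eps ->
  tangent_ball b mu `<=` tangent_ball b eps.
Proof.
move=> mu0 mu_eps x x_mu; have x0 := tangent_ball_pos mu0 x_mu.
move: x_mu; rewrite !tangent_ballE ?(lt_le_trans mu0 mu_eps) //; nra.
Qed.

Lemma tangent_ball_rat b mu : 0 < mu -> exists q, tangent_ball b mu (rat_pt q).
Proof.
move=> mu0; have d0 : 0 < mu / (2 * m.+1%:R) by rewrite divr_gt0 // mulr_gt0 // ltr0Sn.
have [q qc] := rat_pt_approx (lift_pt b mu) d0.
exists q; apply: le_lt_trans (edist_le_box (ltW d0) (fun i => ltW (qc i))) _.
have -> : m.+1%:R * (mu / (2 * m.+1%:R)) = mu / 2.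
  by field; rewrite addrC natr1 pnatr_eq0.
lra.
Qed.

Lemma tball_Ln (y z : pm) eps : 0 < eps -> tball y eps z -> Ln m.+1 z -> z = y.
Proof.
move=> eps0 [//|/(tangent_ball_pos eps0)]; rewrite /Ln /= => + z0.
by rewrite z0 ltxx.
Qed.

End TangentBall.

Section RationalCode.
Variables (m : nat) (A : set (pt m.+1)).
Local Notation pm := (pt m.+1).

Definition coded_zero (c : nat -> bool) (b : pm) : Prop :=
  forall k l : nat, exists q : {ffun 'I_m.+1 -> rat},
    c (pickle (q, k)) /\ tangent_ball b l.+1%:R^-1 (rat_pt q).

Definition rat_code (g : pm -> R) (i : nat) : bool :=
  if @unpickle ({ffun 'I_m.+1 -> rat} * nat)%type i is Some (q, k)
  then `[< `|g (rat_pt q)| < k.+1%:R^-1 >] else false.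

Lemma rat_codeE g q k :
  rat_code g (pickle (q, k)) = `[< `|g (rat_pt q)| < k.+1%:R^-1 >].
Proof. by rewrite /rat_code pickleK. Qed.

Lemma cont_tangent_ball g b e : cont_on A (Xn m.+1) g -> Ln m.+1 b -> ~ A b -> 0 < e ->
  exists2 eps, 0 < eps & forall z, tangent_ball b eps z -> `|g z - g b| < e.
Proof.
move=> g_cont Lb nAb e0; have [V [[_ _ /(_ (conj Lb nAb)) [eps eps0 ->]] gV]] :=
  g_cont b (or_intror Lb) e e0.
exists eps => // z z_eps; apply: gV; first by right.
by left; exact: tangent_ball_pos eps0 z_eps.
Qed.

Lemma cont_zero_coded g b : cont_on A (Xn m.+1) g -> Ln m.+1 b -> ~ A b ->
  g b = 0 <-> coded_zero (rat_code g) b.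
Proof.
move=> g_cont Lb nAb; have inv_pos k : 0 < k.+1%:R^-1 :> R by rewrite invr_gt0.
split=> [gb0 k l|coded].
  have [eps eps0 g_eps] := cont_tangent_ball g_cont Lb nAb (inv_pos k).
  have mu0 : 0 < Num.min eps l.+1%:R^-1 by rewrite lt_min eps0 inv_pos.
  have [q q_mu] := tangent_ball_rat b mu0.
  exists q; rewrite rat_codeE; split.
    apply/asboolP; rewrite -[g _]subr0 -gb0; apply: g_eps.
    by apply: (tangent_ball_le mu0) q_mu; rewrite ge_min lexx.
  by apply: (tangent_ball_le mu0) q_mu; rewrite ge_min lexx orbT.
apply: contrapT => /eqP gb0; have e0 : 0 < `|g b| / 2 by rewrite divr_gt0 ?normr_gt0.
have [eps eps0 g_eps] := cont_tangent_ball g_cont Lb nAb e0.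
have [k] := ltr_add_invr e0; have [l] := ltr_add_invr eps0; rewrite !add0r => l_eps k_e.
have [q [+ q_l]] := coded k l; rewrite rat_codeE => /asboolP gq.
have := g_eps _ (tangent_ball_le (inv_pos l) (ltW l_eps) q_l).
have := ler_distD (g (rat_pt q)) (g b) 0; rewrite !subr0 distrC => ? ?.
move: gq k_e; set d := k.+1%:R^-1; lra.
Qed.

End RationalCode.

Lemma not_all_subsets_zero_traces m (A B : set (pt m.+1))
    (psi : (nat -> bool) -> pt m.+1) :
  B `<=` Ln m.+1 `\` A -> (forall a, B (psi a)) -> injective psi ->
  ~ (forall S, S `<=` B ->
       exists g, cont_on A (Xn m.+1) g /\ forall b, B b -> (S b <-> g b = 0)).
Proof.
move=> BLA Bpsi psi_inj traces.
apply: (@cantor_diagonal _ _ psi (@coded_zero m) psi_inj) => Y Y_psi.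
have [|g [g_cont Yg]] := traces Y; first by move=> _ /Y_psi [a _ <-].
exists (rat_code g) => a; have [La nAa] := BLA _ (Bpsi a).
exact: iff_trans (Yg _ (Bpsi a)) (cont_zero_coded g_cont La nAa).
Qed.

Lemma Pn_Ln_disjoint n (x : pt n) : Pn n x -> Ln n x -> False.
Proof. by rewrite /Pn /Ln /= => + x0; rewrite x0 ltxx. Qed.

Lemma basic_nbhd_tball n (A : set (pt n)) a eps : Ln n a -> ~ A a -> 0 < eps ->
  basic_nbhd A a (tball a eps).
Proof. by move=> La nAa eps0; split=> [/Pn_Ln_disjoint/(_ La) []|//|_]; exists eps. Qed.

Lemma basic_nbhd_ball n (A : set (pt n)) a eps : Ln n a -> A a -> 0 < eps ->
  basic_nbhd A a (ball_E a eps `&` Xn n).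
Proof. by move=> La Aa eps0; split=> [/Pn_Ln_disjoint/(_ La) []|_|[]//]; exists eps. Qed.

Lemma zero_set_locally_constant n (A Y S : set (pt n)) : S `<=` Y ->
  (forall y, Y y -> exists V, basic_nbhd A y V /\ forall z, V z -> Y z -> (S z <-> S y)) ->
  zero_set A Y S.
Proof.
move=> SY S_loc; exists (fun y => (y \notin S)%:R); split.
  move=> y Yy e e0; have [V [Vy VS]] := S_loc y Yy; exists V; split=> // z Vz Yz.
  suff -> : (z \in S) = (y \in S) by rewrite subrr normr0.
  by apply/idP/idP; rewrite !in_setE => /(VS z Vz Yz).
apply/seteqP; split=> y /=.
  by move=> Sy; split; [exact: SY | rewrite mem_set].
by case=> _; case: (boolP (y \in S)) => [/set_mem //|_ /eqP]; rewrite oner_eq0.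
Qed.

Lemma z_embedded_trace n (A Y S : set (pt n)) : z_embedded A Y -> Y `<=` Xn n ->
  zero_set A Y S -> exists g, cont_on A (Xn n) g /\ forall y, Y y -> (S y <-> g y = 0).
Proof.
move=> zY YX /zY [_ [g [g_cont ->]] ->]; exists g; split=> // y Yy.
by split=> [[[_ ->]]|gy0] //; split=> //; split=> //; exact: YX.
Qed.

Lemma not_z_embedded_continuum m (A B : set (pt m.+1)) :
  B `<=` Ln m.+1 `\` A -> (B #= [set: R])%card -> ~ z_embedded A B.
Proof.
move=> BLA /card_esym; rewrite card_eq_le => /andP[/card_leT_inj [h Bh h_inj] _] zB.
have [psi psi_inj] := cantor_inj_R.
apply: (not_all_subsets_zero_traces BLA (fun a => Bh (psi a)) (inj_comp h_inj psi_inj)).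
move=> Y YB; apply: z_embedded_trace zB (fun b Bb => or_intror (BLA b Bb).1) _.
apply: zero_set_locally_constant YB _ => y By; have [Ly nAy] := BLA y By.
exists (tball y 1); split; first exact: basic_nbhd_tball.
by move=> z z1 Bz; rewrite (tball_Ln ltr01 z1 (BLA z Bz).1).
Qed.

Lemma not_z_embedded_Ln m (A B : set (pt m.+1)) : B `<=` Ln m.+1 `\` A ->
  closed_in_Ln B -> ~ countable B -> ~ z_embedded A (Ln m.+1).
Proof.
move=> BLA /closed_in_Ln_closed_E B_closed B_unc zL.
have [psi Bpsi psi_inj] := closed_uncountable_cantor B_closed B_unc.
apply: (not_all_subsets_zero_traces BLA Bpsi psi_inj) => Y YB.
have YL : Y `<=` Ln m.+1 by move=> y /YB /BLA [].
have [|g [g_cont Yg]] := z_embedded_trace (S := Y) zL (fun y Ly => or_intror Ly).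
  apply: zero_set_locally_constant YL _ => y Ly.
  have [Ay|nAy] := pselect (A y); last first.
    exists (tball y 1); split; first exact: basic_nbhd_tball.
    by move=> z z1 Lz; rewrite (tball_Ln ltr01 z1 Lz).
  have [e e0 far] := closed_E_gap B_closed (fun By => (BLA y By).2 Ay).
  exists (ball_E y e `&` Xn m.+1); split; first exact: basic_nbhd_ball.
  have nYy : ~ Y y by move=> /YB /BLA [].
  move=> z [ze _] _; split=> // /YB Bz.
  by have := far z Bz; rewrite edistC leNgt ze.
by exists g; split=> // b Bb; apply: Yg; exact: (BLA b Bb).1.
Qed.

Unset Implicit Arguments.

Theorem mainTheorem9 (n : nat) (A : set (pt n)) :
  leq 2 n -> A `<=` Ln n ->
  (forall B : set (pt n), B `<=` Ln n `\` A ->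
     (B #= [set: R])%card -> ~ z_embedded A B) /\
  (forall B : set (pt n), B `<=` Ln n `\` A ->
     closed_in_Ln B -> ~ countable B -> ~ z_embedded A (Ln n)).
Proof.
case: n A => [|[|m]] A // _ _.
by split=> B; [exact: not_z_embedded_continuum | exact: not_z_embedded_Ln].
Qed.
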